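(* Let all types below carry change structures (value type $V$, change type $D$, $\oplus:V\to D\to V$, $\ominus:V\to V\to D$, with $x\oplus(y\ominus x)=y$), products carrying the componentwise change structure. Each of the following triples $(C,i,d)$ is a value preserving incrementalization of the indicated function $f$: (1) (Triv) For any $f:A\to B$: $C=A$, $i\,x=(f\,x,x)$, $d\,x'\,x=(f(x\oplus x')\ominus f\,x,\ x\oplus x')$. (2) (Self) For $f:A\to B$ and $d_0:A'\to B'$ with $f(x\oplus x')=f\,x\oplus d_0\,x'$ for all $x,x'$: $C=\mathsf{Unit}$, $i\,x=(f\,x,\star)$, $d\,x'\,\star=(d_0\,x',\star)$. (3) (Lin) For $f:A\to B$ with $A=A'$, $B=B'$ and $f(x\oplus x')=f\,x\oplus f\,x'$ for all $x,x'$: $C=\mathsf{Unit}$, $i\,x=(f\,x,\star)$, $d\,x'\,\star=(f\,x',\star)$. (4) (BiLin) For $f:A\times B\to C_0$ with $A=A'$, $B=B'$, $C_0=C_0'$, such that $f(x\oplus x',y)=f(x,y)\oplus f(x',y)$ and $f(x,y\oplus y')=f(x,y)\oplus f(x,y')$ for all $x,x',y,y'$, and $\oplus$ on $C_0$ is commutative and associative: $C=A\times B$, $i(x,y)=(f(x,y),(x,y))$, $d\,(x',y')\,(x,y)=(f(x',y')\oplus f(x',y)\oplus f(x,y'),\ (x\oplus x',y\oplus y'))$. (5) (Add) For a type $A$ with $A=A'$ and $\oplus$ commutative and associative on $A$, and $f:A\times A\to A$, $f(x,y)=x\oplus y$: $C=\mathsf{Unit}$, $i(x,y)=(x\oplus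 y,\star)$, $d\,(x',y')\,\star=(x'\oplus y',\star)$.
   Context: For a function $f:A\to B$ between change structures (writing $A'$, $B'$ for the change types), an incrementalization is a triple $(C,i,d)$ with $C$ a type, $i:A\to B\times C$, $d:A'\to C\to B'\times C$. ''$A=A'$'' means the change type of $A$ equals its value type, so $\oplus:A\to A\to A$. Define $\mathsf{iter}\,(C,i,d)\,x\,[\,]=i\,x$ and $\mathsf{iter}\,(C,i,d)\,x\,(x'::xs')=(y\oplus y',c_2)$ where $(y,c_1)=\mathsf{iter}\,(C,i,d)\,x\,xs'$ and $(y',c_2)=d\,x'\,c_1$; and $\mathsf{sum}\,x\,[\,]=x$, $\mathsf{sum}\,x\,(x'::xs')=(\mathsf{sum}\,x\,xs')\oplus x'$. The incrementalization is value preserving for $f$ if $(\mathsf{iter}\,(C,i,d)\,x\,xs')_1=f(\mathsf{sum}\,x\,xs')$ for all $x\in A$ and all finite lists $xs'$ of changes. $\star$ denotes the element of $\mathsf{Unit}$. *)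

From Stdlib Require Import List.

Record ChangeStruct (V D : Type) := {
  oplus : V -> D -> V;
  ominus : V -> V -> D;
  oplus_ominus : forall x y : V, oplus x (ominus y x) = y
}.
Arguments oplus {V D} c _ _.
Arguments ominus {V D} c _ _.

Definition prodCS {VA DA VB DB : Type}
  (ca : ChangeStruct VA DA) (cb : ChangeStruct VB DB)
  : ChangeStruct (VA * VB) (DA * DB).
Proof.
  refine {| oplus := fun x dx => (oplus ca (fst x) (fst dx), oplus cb (snd x) (snd dx));
            ominus := fun y x => (ominus ca (fst y) (fst x), ominus cb (snd y) (snd x)) |}.
  intros [x1 x2] [y1 y2]; simpl.
  rewrite !oplus_ominus; reflexivity.
Defined.

Fixpoint iter {A A' B B' C : Type} (cb : ChangeStruct B B')
  (i : A -> B * C) (d : A' -> C -> B' * C) (x : A) (xs : list A') : B * C :=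
  match xs with
  | nil => i x
  | x' :: xs' =>
      let (y, c1) := iter cb i d x xs' in
      let (y', c2) := d x' c1 in
      (oplus cb y y', c2)
  end.

Fixpoint sum {A A' : Type} (ca : ChangeStruct A A') (x : A) (xs : list A') : A :=
  match xs with
  | nil => x
  | x' :: xs' => oplus ca (sum ca x xs') x'
  end.

Definition value_preserving {A A' B B' : Type}
  (ca : ChangeStruct A A') (cb : ChangeStruct B B') (f : A -> B)
  (C : Type) (i : A -> B * C) (d : A' -> C -> B' * C) : Prop :=
  forall (x : A) (xs : list A'), fst (iter cb i d x xs) = f (sum ca x xs).

(* Each incrementalization keeps a cache that is a function of the current
   input: after processing the changes xs, iter returns f (sum x xs) together
   with cache (sum x xs).  This is an induction on xs once one step is shown to
   update the output by f x (+) y' = f (x (+) x') and the cache to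
   cache (x (+) x'); for the individual triples that step is oplus_ominus
   (Triv), the derivative law (Self, Lin, Add) or bilinear expansion (BiLin). *)

Section Cached.

Variables (A A' B B' C : Type) (ca : ChangeStruct A A') (cb : ChangeStruct B B').
Variables (f : A -> B) (cache : A -> C) (d : A' -> C -> B' * C).

Hypothesis d_output : forall x x', oplus cb (f x) (fst (d x' (cache x))) = f (oplus ca x x').
Hypothesis d_cache : forall x x', snd (d x' (cache x)) = cache (oplus ca x x').

Lemma iter_cached (x : A) (xs : list A') :
  iter cb (fun x => (f x, cache x)) d x xs = (f (sum ca x xs), cache (sum ca x xs)).
Proof.
  induction xs as [|x' xs IH]; simpl; [reflexivity|].
  rewrite IH, <- d_output, <- d_cache.
  destruct (d x' (cache (sum ca x xs))); reflexivity.
Qed.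

Lemma value_preserving_cached :
  value_preserving ca cb f C (fun x => (f x, cache x)) d.
Proof. intros x xs; rewrite iter_cached; reflexivity. Qed.

End Cached.

Lemma value_preserving_triv (A A' B B' : Type) (ca : ChangeStruct A A')
    (cb : ChangeStruct B B') (f : A -> B) :
  value_preserving ca cb f A (fun x => (f x, x))
    (fun x' x => (ominus cb (f (oplus ca x x')) (f x), oplus ca x x')).
Proof.
  apply (value_preserving_cached _ _ _ _ _ ca cb f (fun x => x)); intros x x'; simpl.
  - apply oplus_ominus.
  - reflexivity.
Qed.

Lemma value_preserving_self (A A' B B' : Type) (ca : ChangeStruct A A')
    (cb : ChangeStruct B B') (f : A -> B) (d0 : A' -> B') :
  (forall x x', f (oplus ca x x') = oplus cb (f x) (d0 x')) ->
  value_preserving ca cb f unit (fun x => (f x, tt)) (fun x' (_ : unit) => (d0 x', tt)).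
Proof.
  intros f_derivative.
  apply (value_preserving_cached _ _ _ _ _ ca cb f (fun _ => tt)); intros x x'; simpl.
  - symmetry; apply f_derivative.
  - reflexivity.
Qed.

Section CommutativeSemigroup.

Variables (T : Type) (op : T -> T -> T).
Hypothesis opC : forall u v, op u v = op v u.
Hypothesis opA : forall u v w, op (op u v) w = op u (op v w).

Lemma op_left_comm (u v w : T) : op u (op v w) = op v (op u w).
Proof. rewrite <- opA, (opC u v), opA; reflexivity. Qed.

Lemma op_interchange (u v w z : T) : op (op u v) (op w z) = op (op u w) (op v z).
Proof. rewrite !opA, (op_left_comm v w z); reflexivity. Qed.

End CommutativeSemigroup.

Lemma bilinear_oplus (A B C0 : Type) (ca : ChangeStruct A A) (cb : ChangeStruct B B)
    (cc : ChangeStruct C0 C0) (f : A * B -> C0) :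
  (forall x x' y, f (oplus ca x x', y) = oplus cc (f (x, y)) (f (x', y))) ->
  (forall x y y', f (x, oplus cb y y') = oplus cc (f (x, y)) (f (x, y'))) ->
  (forall u v : C0, oplus cc u v = oplus cc v u) ->
  (forall u v w : C0, oplus cc (oplus cc u v) w = oplus cc u (oplus cc v w)) ->
  forall x x' y y',
    f (oplus ca x x', oplus cb y y')
    = oplus cc (f (x, y)) (oplus cc (oplus cc (f (x', y')) (f (x', y))) (f (x, y'))).
Proof.
  intros f_linl f_linr opC opA x x' y y'.
  rewrite f_linl, !f_linr, (op_interchange _ _ opC opA), opA; f_equal.
  rewrite (opC (f (x', y'))), opA, (opC (f (x', y'))); reflexivity.
Qed.

Lemma value_preserving_bilin (A B C0 : Type) (ca : ChangeStruct A A)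
    (cb : ChangeStruct B B) (cc : ChangeStruct C0 C0) (f : A * B -> C0) :
  (forall x x' y, f (oplus ca x x', y) = oplus cc (f (x, y)) (f (x', y))) ->
  (forall x y y', f (x, oplus cb y y') = oplus cc (f (x, y)) (f (x, y'))) ->
  (forall u v : C0, oplus cc u v = oplus cc v u) ->
  (forall u v w : C0, oplus cc (oplus cc u v) w = oplus cc u (oplus cc v w)) ->
  value_preserving (prodCS ca cb) cc f (A * B)
    (fun xy => (f xy, xy))
    (fun dxy xy =>
       (oplus cc (oplus cc (f (fst dxy, snd dxy)) (f (fst dxy, snd xy)))
                 (f (fst xy, snd dxy)),
        (oplus ca (fst xy) (fst dxy), oplus cb (snd xy) (snd dxy)))).
Proof.
  intros f_linl f_linr opC opA.
  apply (value_preserving_cached _ _ _ _ _ (prodCS ca cb) cc f (fun xy => xy));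
    intros [x y] [x' y']; simpl.
  - symmetry; apply (bilinear_oplus _ _ _ ca cb); assumption.
  - reflexivity.
Qed.

Theorem theorem5p7 :
  (* (1) Triv *)
  (forall (A A' B B' : Type) (ca : ChangeStruct A A') (cb : ChangeStruct B B')
          (f : A -> B),
     value_preserving ca cb f A
       (fun x => (f x, x))
       (fun x' x => (ominus cb (f (oplus ca x x')) (f x), oplus ca x x')))
  /\
  (* (2) Self *)
  (forall (A A' B B' : Type) (ca : ChangeStruct A A') (cb : ChangeStruct B B')
          (f : A -> B) (d0 : A' -> B'),
     (forall x x', f (oplus ca x x') = oplus cb (f x) (d0 x')) ->
     value_preserving ca cb f unit
       (fun x => (f x, tt))
       (fun x' (_ : unit) => (d0 x', tt)))
  /\
  (* (3) Lin *)
  (forall (A B : Type) (ca : ChangeStruct A A) (cb : ChangeStruct B B)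
          (f : A -> B),
     (forall x x', f (oplus ca x x') = oplus cb (f x) (f x')) ->
     value_preserving ca cb f unit
       (fun x => (f x, tt))
       (fun x' (_ : unit) => (f x', tt)))
  /\
  (* (4) BiLin *)
  (forall (A B C0 : Type) (ca : ChangeStruct A A) (cb : ChangeStruct B B)
          (cc : ChangeStruct C0 C0) (f : A * B -> C0),
     (forall x x' y, f (oplus ca x x', y) = oplus cc (f (x, y)) (f (x', y))) ->
     (forall x y y', f (x, oplus cb y y') = oplus cc (f (x, y)) (f (x, y'))) ->
     (forall u v : C0, oplus cc u v = oplus cc v u) ->
     (forall u v w : C0, oplus cc (oplus cc u v) w = oplus cc u (oplus cc v w)) ->
     value_preserving (prodCS ca cb) cc f (A * B)
       (fun xy => (f xy, xy))
       (fun dxy xy =>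
          (oplus cc (oplus cc (f (fst dxy, snd dxy)) (f (fst dxy, snd xy)))
                    (f (fst xy, snd dxy)),
           (oplus ca (fst xy) (fst dxy), oplus cb (snd xy) (snd dxy)))))
  /\
  (* (5) Add *)
  (forall (A : Type) (ca : ChangeStruct A A),
     (forall u v : A, oplus ca u v = oplus ca v u) ->
     (forall u v w : A, oplus ca (oplus ca u v) w = oplus ca u (oplus ca v w)) ->
     value_preserving (prodCS ca ca) ca (fun xy => oplus ca (fst xy) (snd xy)) unit
       (fun xy => (oplus ca (fst xy) (snd xy), tt))
       (fun dxy (_ : unit) => (oplus ca (fst dxy) (snd dxy), tt))).
Proof.
  split; [|split; [|split; [|split]]].
  - exact value_preserving_triv.
  - exact value_preserving_self.
  - intros A B ca cb f f_lin; exact (value_preserving_self _ _ _ _ ca cb f f f_lin).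
  - exact value_preserving_bilin.
  - intros A ca opC opA.
    apply value_preserving_self; intros [x y] [x' y']; simpl.
    apply (op_interchange _ _ opC opA).
Qed.
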